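(* Let $\Gamma$ be a typing environment, $\sigma$ a channel state and $P$ a process. If the configuration $\sigma\triangleright P$ is well-typed, $\Gamma\vdash\sigma\triangleright P$, then $\sigma\triangleright P$ has no error reduction, i.e., $\sigma\triangleright P\not\to^{\mathrm{err}}$.
   Context: Syntax (π-calculus with allocation). Channel names $c,d\in\mathcal N$, variables $x,y$, identifiers $u,v$ ranging over both, process variables $X$. Processes: $P,Q ::= u!\langle\vec v\rangle.P \mid u?(\vec x).P \mid \mathbf 0 \mid \mathsf{if}\ u=v\ \mathsf{then}\ P\ \mathsf{else}\ Q \mid \mathsf{rec}\,X.P \mid X \mid P\mid Q \mid (\nu c{:}s)P \mid \mathsf{alloc}\,x.P \mid \mathsf{free}\,u.P$, where $s\in\{\top,\bot\}$ (allocated/deallocated). Input binds $\vec x$, $\mathsf{alloc}$ binds $x$, $(\nu c{:}s)$ binds $c$, $\mathsf{rec}$ binds $X$. A channel state is a finite partial map $\sigma$ from channel names to $\{\top,\bot\}$; a configuration $\sigma\triangleright P$ requires the free names of $P$ to lie in $\mathrm{dom}(\sigma)$; it is closed if $P$ has no free variables. Contexts: $\mathcal C ::= [-]\mid \mathcal C\mid P\mid P\mid\mathcal C\mid (\nu c)\mathcal C$, applied to configurations by $[\sigma\triangleright P]=\sigma\triangleright P$; if $\mathcal C[\sigma\triangleright P]=\sigma'\triangleright P'$ then $(\mathcal C\mid Q)[\sigma\triangleright P]=\sigma'\triangleright(P'\mid Q)$, $(Q\mid\mathcal C)[\sigma\triangleright P]=\sigma'\triangleright(Q\mid P')$; and if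 $\mathcal C[\sigma\triangleright P]=\sigma',c{:}s\triangleright P'$ then $((\nu c)\mathcal C)[\sigma\triangleright P]=\sigma'\triangleright(\nu c{:}s)P'$. $\equiv$ is a standard π-calculus structural equivalence. Error reduction $\to^{\mathrm{err}}$ is the least relation on configurations closed under contexts (if $\sigma\triangleright P\to^{\mathrm{err}}$ then $\mathcal C[\sigma\triangleright P]\to^{\mathrm{err}}$) satisfying: $\sigma\triangleright c!\langle\vec d\rangle.P\mid c?(\vec x).Q\to^{\mathrm{err}}$ if $|\vec d|\ne|\vec x|$; $\sigma\triangleright c!\langle\vec d\rangle.P\to^{\mathrm{err}}$ if $\sigma(c)=\bot$; $\sigma\triangleright c?(\vec x).Q\to^{\mathrm{err}}$ if $\sigma(c)=\bot$; and $\sigma\triangleright P\to^{\mathrm{err}}$ if $P\equiv Q$ and $\sigma\triangleright Q\to^{\mathrm{err}}$. Types: $T::=[T_1,\dots,T_n]^a\mid\mathsf{Proc}$, attributes $a::=\mathsf{aff}\mid\mathsf{un}\mid\bullet_i$ ($i\in\mathbb N$; $\bullet_i$ = unique after $i$ steps). Typing environments are finite multisets of assumptions $u:T$ or $X:\mathsf{Proc}$. Decrement: $\Gamma,u:[\vec T]^{a-1}$ is $\Gamma$ if $a=\mathsf{aff}$, $\Gamma,u:[\vec T]^{\mathsf{un}}$ if $a=\mathsf{un}$, $\Gamma,u:[\vec T]^{\bullet_i}$ if $a=\bullet_{i+1}$. Splitting: $[\vec T]^{\mathsf{un}}=[\vec T]^{\mathsf{un}}\circ[\vec T]^{\mathsf{un}}$,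 $\mathsf{Proc}=\mathsf{Proc}\circ\mathsf{Proc}$, $[\vec T]^{\bullet_i}=[\vec T]^{\mathsf{aff}}\circ[\vec T]^{\bullet_{i+1}}$. Subtyping rules: $\bullet_i\le\bullet_{i+1}$, $\bullet_{i+1}\le\mathsf{un}$, $\mathsf{un}\le\mathsf{aff}$, $[\vec T]^{a_1}\le[\vec T]^{a_2}$ if $a_1\le a_2$. The judgement $\Gamma\vdash P$ is inductively defined by (bound variables fresh, commas denote multiset union): if $\Gamma,u:[\vec T]^{a-1},\vec x:\vec T\vdash P$ then $\Gamma,u:[\vec T]^a\vdash u?(\vec x).P$; if $\Gamma,u:[\vec T]^{a-1}\vdash P$ then $\Gamma,u:[\vec T]^a,\vec v:\vec T\vdash u!\langle\vec v\rangle.P$; if $\Gamma_1\vdash P$ and $\Gamma_2\vdash Q$ then $\Gamma_1,\Gamma_2\vdash P\mid Q$; if $u,v$ occur in $\Gamma$, $\Gamma\vdash P$ and $\Gamma\vdash Q$ then $\Gamma\vdash\mathsf{if}\ u=v\ \mathsf{then}\ P\ \mathsf{else}\ Q$; if $\Gamma^{\mathsf{un}},X:\mathsf{Proc}\vdash P$ then $\Gamma^{\mathsf{un}}\vdash\mathsf{rec}\,X.P$, where $\Gamma^{\mathsf{un}}$ contains only unrestricted assumptions; $X:\mathsf{Proc}\vdash X$; if $\Gamma,x:[\vec T]^{\bullet_0}\vdash P$ then $\Gamma\vdash\mathsf{alloc}\,x.P$; if $\Gamma\vdash P$ then $\Gamma,u:[\vec T]^{\bullet_0}\vdash\mathsf{free}\,u.P$;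 $\emptyset\vdash\mathbf 0$; if $\Gamma,c:T\vdash P$ then $\Gamma\vdash(\nu c{:}\top)P$; if $\Gamma\vdash P$ then $\Gamma\vdash(\nu c{:}\bot)P$; and the structural rules: if $T=T_1\circ T_2$ and $\Gamma,u:T_1,u:T_2\vdash P$ then $\Gamma,u:T\vdash P$; if $\Gamma\vdash P$ then $\Gamma,u:T\vdash P$; if $\Gamma,u:T_2\vdash P$ and $T_1\le T_2$ then $\Gamma,u:T_1\vdash P$; if $\Gamma,u:[\vec T_2]^{\bullet_0}\vdash P$ then $\Gamma,u:[\vec T_1]^{\bullet_0}\vdash P$. Configuration typing: $\Gamma\vdash\sigma\triangleright P$ holds iff $\sigma(c)=\top$ for every channel name $c\in\mathrm{dom}(\Gamma)$, $\Gamma\vdash P$, and $\Gamma$ is a partial function. *)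

From Stdlib Require Import List Arith Permutation Relations.
Import ListNotations.

Inductive ident : Type :=
| IChan (c : nat)
| IVar (x : nat).

(* Channel allocation states: Top = allocated, Bot = deallocated. *)
Inductive cstate : Type := Top | Bot.

Inductive proc : Type :=
| POut (u : ident) (vs : list ident) (P : proc)
| PIn (u : ident) (xs : list nat) (P : proc)      (* u?(xs).P, binds variables xs *)
| PNil
| PIf (u v : ident) (P Q : proc)
| PRec (X : nat) (P : proc)
| PVar (X : nat)
| PPar (P Q : proc)
| PNu (c : nat) (s : cstate) (P : proc)           (* (nu c:s) P, binds channel c *)
| PAlloc (x : nat) (P : proc)                     (* alloc x.P, binds variable x *)
| PFree (u : ident) (P : proc).

Definition chans (us : list ident) : list nat :=
  flat_map (fun u => match u with IChan c => [c] | IVar _ => [] end) us.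

Fixpoint fn (P : proc) : list nat :=
  match P with
  | POut u vs P => chans (u :: vs) ++ fn P
  | PIn u _ P => chans [u] ++ fn P
  | PNil => []
  | PIf u v P Q => chans [u; v] ++ fn P ++ fn Q
  | PRec _ P => fn P
  | PVar _ => []
  | PPar P Q => fn P ++ fn Q
  | PNu c _ P => filter (fun d => negb (Nat.eqb d c)) (fn P)
  | PAlloc _ P => fn P
  | PFree u P => chans [u] ++ fn P
  end.

Fixpoint names (P : proc) : list nat :=
  match P with
  | POut u vs P => chans (u :: vs) ++ names P
  | PIn u _ P => chans [u] ++ names P
  | PNil => []
  | PIf u v P Q => chans [u; v] ++ names P ++ names Q
  | PRec _ P => names P
  | PVar _ => []
  | PPar P Q => names P ++ names Q
  | PNu c _ P => c :: names P
  | PAlloc _ P => names P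
  | PFree u P => chans [u] ++ names P
  end.

Definition ren_id (c d : nat) (u : ident) : ident :=
  match u with
  | IChan e => if Nat.eqb e c then IChan d else IChan e
  | IVar x => IVar x
  end.

Fixpoint rename (c d : nat) (P : proc) : proc :=
  match P with
  | POut u vs P => POut (ren_id c d u) (map (ren_id c d) vs) (rename c d P)
  | PIn u xs P => PIn (ren_id c d u) xs (rename c d P)
  | PNil => PNil
  | PIf u v P Q => PIf (ren_id c d u) (ren_id c d v) (rename c d P) (rename c d Q)
  | PRec X P => PRec X (rename c d P)
  | PVar X => PVar X
  | PPar P Q => PPar (rename c d P) (rename c d Q)
  | PNu e s P => if Nat.eqb e c then PNu e s P else PNu e s (rename c d P)
  | PAlloc x P => PAlloc x (rename c d P)
  | PFree u P => PFree (ren_id c d u) (rename c d P)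
  end.

Inductive scong : proc -> proc -> Prop :=
| sc_refl P : scong P P
| sc_sym P Q : scong P Q -> scong Q P
| sc_trans P Q R : scong P Q -> scong Q R -> scong P R
| sc_out u vs P P' : scong P P' -> scong (POut u vs P) (POut u vs P')
| sc_in u xs P P' : scong P P' -> scong (PIn u xs P) (PIn u xs P')
| sc_if u v P P' Q Q' : scong P P' -> scong Q Q' -> scong (PIf u v P Q) (PIf u v P' Q')
| sc_rec X P P' : scong P P' -> scong (PRec X P) (PRec X P')
| sc_par P P' Q Q' : scong P P' -> scong Q Q' -> scong (PPar P Q) (PPar P' Q')
| sc_nu c s P P' : scong P P' -> scong (PNu c s P) (PNu c s P')
| sc_alloc x P P' : scong P P' -> scong (PAlloc x P) (PAlloc x P')
| sc_free u P P' : scong P P' -> scong (PFree u P) (PFree u P')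
| sc_par_nil P : scong (PPar P PNil) P
| sc_par_comm P Q : scong (PPar P Q) (PPar Q P)
| sc_par_assoc P Q R : scong (PPar (PPar P Q) R) (PPar P (PPar Q R))
| sc_nu_nil c s : scong (PNu c s PNil) PNil
| sc_nu_swap c s d t P : c <> d -> scong (PNu c s (PNu d t P)) (PNu d t (PNu c s P))
| sc_extr c s P Q : ~ In c (fn Q) -> scong (PPar (PNu c s P) Q) (PNu c s (PPar P Q))
| sc_alpha c d s P : ~ In d (names P) -> scong (PNu c s P) (PNu d s (rename c d P)).

Definition chstate := nat -> option cstate.

Definition finite_state (sigma : chstate) : Prop :=
  exists l : list nat, forall c, sigma c <> None -> In c l.

Definition upd (sigma : chstate) (c : nat) (s : cstate) : chstate :=
  fun d => if Nat.eqb d c then Some s else sigma d.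

Definition is_config (sigma : chstate) (P : proc) : Prop :=
  forall c, In c (fn P) -> sigma c <> None.

Definition all_chans (vs : list ident) : Prop :=
  Forall (fun v => exists d, v = IChan d) vs.

Inductive err : chstate -> proc -> Prop :=
| err_arity sigma c ds P xs Q :
    all_chans ds -> length ds <> length xs ->
    err sigma (PPar (POut (IChan c) ds P) (PIn (IChan c) xs Q))
| err_out sigma c ds P :
    all_chans ds -> sigma c = Some Bot -> err sigma (POut (IChan c) ds P)
| err_in sigma c xs Q :
    sigma c = Some Bot -> err sigma (PIn (IChan c) xs Q)
| err_par_l sigma P Q : err sigma P -> err sigma (PPar P Q)
| err_par_r sigma P Q : err sigma Q -> err sigma (PPar P Q)
| err_nu sigma c s P :
    sigma c = None -> err (upd sigma c s) P -> err sigma (PNu c s P)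
| err_struct sigma P Q : scong P Q -> err sigma Q -> err sigma P.

Inductive attr : Type :=
| Aff
| Un
| Uniq (i : nat).   (* bullet_i : unique after i steps *)

Inductive ty : Type :=
| TCh (ts : list ty) (a : attr)
| TProc.

Inductive key : Type :=
| KId (u : ident)
| KPV (X : nat).

Definition env := list (key * ty).   (* a multiset, up to Permutation *)

(* Gamma, u:[ts]^(a-1)  (None when a = bullet_0, where it is undefined) *)
Definition dec (u : ident) (ts : list ty) (a : attr) : option env :=
  match a with
  | Aff => Some []
  | Un => Some [(KId u, TCh ts Un)]
  | Uniq (S i) => Some [(KId u, TCh ts (Uniq i))]
  | Uniq 0 => None
  end.

Inductive split : ty -> ty -> ty -> Prop :=
| split_un ts : split (TCh ts Un) (TCh ts Un) (TCh ts Un)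
| split_proc : split TProc TProc TProc
| split_uniq ts i : split (TCh ts (Uniq i)) (TCh ts Aff) (TCh ts (Uniq (S i))).

Inductive attr_le1 : attr -> attr -> Prop :=
| ale_uniq i : attr_le1 (Uniq i) (Uniq (S i))
| ale_uniq_un i : attr_le1 (Uniq (S i)) Un
| ale_un_aff : attr_le1 Un Aff.

Definition attr_le : attr -> attr -> Prop := clos_refl_trans attr attr_le1.

Inductive subty : ty -> ty -> Prop :=
| subty_ch ts a1 a2 : attr_le a1 a2 -> subty (TCh ts a1) (TCh ts a2).

Definition unrestricted (T : ty) : Prop :=
  match T with
  | TCh _ Un => True
  | TProc => True
  | _ => False
  end.

Definition var_env (xs : list nat) (ts : list ty) : env :=
  combine (map (fun x => KId (IVar x)) xs) ts.

Definition id_env (vs : list ident) (ts : list ty) : env :=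
  combine (map KId vs) ts.

Definition dom (G : env) : list key := map fst G.

(* bound channel names are taken fresh (Barendregt convention); the rule
   typ_nu_alpha makes typing of restrictions invariant under alpha-renaming *)
Inductive typ : env -> proc -> Prop :=
| typ_in G u ts a D xs P :
    dec u ts a = Some D -> length xs = length ts ->
    typ (G ++ D ++ var_env xs ts) P ->
    typ (G ++ [(KId u, TCh ts a)]) (PIn u xs P)
| typ_out G u ts a D vs P :
    dec u ts a = Some D -> length vs = length ts ->
    typ (G ++ D) P ->
    typ (G ++ (KId u, TCh ts a) :: id_env vs ts) (POut u vs P)
| typ_par G1 G2 P Q : typ G1 P -> typ G2 Q -> typ (G1 ++ G2) (PPar P Q)
| typ_if G u v P Q :
    In (KId u) (dom G) -> In (KId v) (dom G) ->
    typ G P -> typ G Q -> typ G (PIf u v P Q)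
| typ_rec G X P :
    Forall (fun kT => unrestricted (snd kT)) G ->
    typ (G ++ [(KPV X, TProc)]) P -> typ G (PRec X P)
| typ_var X : typ [(KPV X, TProc)] (PVar X)
| typ_alloc G x ts P :
    typ (G ++ [(KId (IVar x), TCh ts (Uniq 0))]) P -> typ G (PAlloc x P)
| typ_free G u ts P :
    typ G P -> typ (G ++ [(KId u, TCh ts (Uniq 0))]) (PFree u P)
| typ_nil : typ [] PNil
| typ_nu_top G c T P :
    ~ In (KId (IChan c)) (dom G) ->
    typ (G ++ [(KId (IChan c), T)]) P -> typ G (PNu c Top P)
| typ_nu_bot G c P :
    ~ In (KId (IChan c)) (dom G) ->
    typ G P -> typ G (PNu c Bot P)
| typ_nu_alpha G c d s P :
    ~ In d (names P) ->
    typ G (PNu d s (rename c d P)) -> typ G (PNu c s P)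
| typ_perm G G' P : Permutation G G' -> typ G P -> typ G' P
| typ_split G k T T1 T2 P :
    split T T1 T2 -> typ (G ++ [(k, T1); (k, T2)]) P -> typ (G ++ [(k, T)]) P
| typ_weak G k T P : typ G P -> typ (G ++ [(k, T)]) P
| typ_sub G k T1 T2 P :
    subty T1 T2 -> typ (G ++ [(k, T2)]) P -> typ (G ++ [(k, T1)]) P
| typ_uniq0 G k ts1 ts2 P :
    typ (G ++ [(k, TCh ts2 (Uniq 0))]) P -> typ (G ++ [(k, TCh ts1 (Uniq 0))]) P.

Definition config_typed (G : env) (sigma : chstate) (P : proc) : Prop :=
  (forall c, In (KId (IChan c)) (dom G) -> sigma c = Some Top) /\
  typ G P /\
  NoDup (dom G).

(* Error reduction only inspects the unguarded actions of a process. An arity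
   map [r] assigns each channel the arity it is used at ([None] for a
   deallocated channel); [P] is [arity_safe] for [r] if every unguarded action
   on [c] has arity [r c], where a [Top] restriction may bind any arity and a
   [Bot] restriction binds [None]. Safety is invariant under structural
   congruence and rules out every error step once the deallocated channels of
   the state have no arity. By induction on typing, a well-typed process is
   safe for the arity map read off its environment, except at channels held at
   [bullet_0]: these occur once in the environment, and the derivation chooses
   their arity. *)
From Pilot Require Import Defs.
From Stdlib Require Import List Arith Lia Permutation.
Import ListNotations.

Definition arity_map := nat -> option nat.

Definition set_arity (r : arity_map) (c : nat) (v : option nat) : arity_map :=
  fun e => if e =? c then v else r e.

Fixpoint arity_safe (r : arity_map) (P : proc) : Prop :=
  match P with
  | POut (IChan c) ds _ => r c = Some (length ds)
  | PIn (IChan c) xs _ => r c = Some (length xs)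
  | PPar P1 P2 => arity_safe r P1 /\ arity_safe r P2
  | PNu c Top P1 => exists n, arity_safe (set_arity r c (Some n)) P1
  | PNu c Bot P1 => arity_safe (set_arity r c None) P1
  | _ => True
  end.

Lemma set_arity_mono (r r' : arity_map) c v :
  (forall e n, r e = Some n -> r' e = Some n) ->
  forall e n, set_arity r c v e = Some n -> set_arity r' c v e = Some n.
Proof. unfold set_arity; intros H e n; destruct (e =? c); auto. Qed.

Lemma arity_safe_mono P : forall r r' : arity_map,
  (forall c n, r c = Some n -> r' c = Some n) -> arity_safe r P -> arity_safe r' P.
Proof.
  induction P as [[c|] | [c|] | | | | | P1 IH1 P2 IH2 | c [|] P IH | |];
    simpl; intros r r' Hrr' Hsafe; auto.
  - destruct Hsafe; eauto.
  - destruct Hsafe as [n Hn]; exists n; eauto using set_arity_mono.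
  - eauto using set_arity_mono.
Qed.

Lemma arity_safe_ext P (r r' : arity_map) :
  (forall c, r c = r' c) -> arity_safe r P -> arity_safe r' P.
Proof. intros H; apply arity_safe_mono; intros c n; rewrite H; auto. Qed.

Lemma arity_safe_fn P : forall r r' : arity_map,
  (forall c, In c (fn P) -> r c = r' c) -> arity_safe r P -> arity_safe r' P.
Proof.
  induction P as [[c|] | [c|] | | | | | P1 IH1 P2 IH2 | c s P IH | |];
    simpl; intros r r' Hfn Hsafe; auto.
  - rewrite <- Hfn; auto.
  - rewrite <- Hfn; auto.
  - destruct Hsafe; split; [eapply IH1 | eapply IH2]; try eassumption;
      intros; apply Hfn, in_or_app; auto.
  - assert (Hset : forall v e, In e (fn P) -> set_arity r c v e = set_arity r' c v e).
    { intros v e He; unfold set_arity; destruct (Nat.eqb_spec e c); auto.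
      apply Hfn, filter_In; split; auto. apply Nat.eqb_neq in n; rewrite n; auto. }
    destruct s; [destruct Hsafe as [n Hn]; exists n|]; eauto.
Qed.

Lemma in_fn_names P c : In c (fn P) -> In c (names P).
Proof.
  induction P; simpl; rewrite ?in_app_iff; intuition.
  apply filter_In in H; intuition.
Qed.

Lemma arity_safe_rename P : forall (r r' : arity_map) c d,
  ~ In d (names P) -> r' d = r c -> (forall e, e <> c -> e <> d -> r' e = r e) ->
  arity_safe r P <-> arity_safe r' (rename c d P).
Proof.
  induction P as [[e|] vs P _ | [e|] xs P _ | | | | | P1 IH1 P2 IH2 | e s P IH | |];
    simpl; intros r r' c d Hd Hrd Hr; try tauto.
  - rewrite length_map; destruct (Nat.eqb_spec e c); simpl.
    + subst; rewrite Hrd; tauto.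
    + rewrite Hr; auto; tauto.
  - destruct (Nat.eqb_spec e c); simpl.
    + subst; rewrite Hrd; tauto.
    + rewrite Hr; auto; tauto.
  - rewrite in_app_iff in Hd.
    rewrite (IH1 r r' c d), (IH2 r r' c d); auto; tauto.
  - destruct (Nat.eqb_spec e c) as [<- | Hec].
    + (* the binder shadows the renamed channel, so [rename] leaves the body unchanged *)
      assert (Hset : forall v x, In x (fn P) -> set_arity r e v x = set_arity r' e v x).
      { intros v x Hx; unfold set_arity; destruct (Nat.eqb_spec x e); auto.
        symmetry; apply Hr; auto. intros ->; apply Hd; right; apply in_fn_names; auto. }
      assert (Hsym : forall v x, In x (fn P) -> set_arity r' e v x = set_arity r e v x)
        by (intros; symmetry; auto).
      destruct s; simpl; split;
        [intros [n Hn]; exists n | intros [n Hn]; exists n | intros Hn | intros Hn];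
        (eapply arity_safe_fn; [|eassumption]; auto).
    + assert (Hed : e <> d) by (intros ->; apply Hd; left; auto).
      assert (Hset : forall v, arity_safe (set_arity r e v) P <->
                               arity_safe (set_arity r' e v) (rename c d P)).
      { intros v; apply IH.
        - intro; apply Hd; right; auto.
        - unfold set_arity; destruct (Nat.eqb_spec d e), (Nat.eqb_spec c e); congruence.
        - intros x Hxc Hxd; unfold set_arity; destruct (x =? e); auto. }
      destruct s; simpl; [split; intros [n Hn]; exists n; apply Hset; auto | apply Hset].
Qed.

Lemma set_arity_comm (r : arity_map) c d v w :
  c <> d -> forall e, set_arity (set_arity r c v) d w e = set_arity (set_arity r d w) c v e.
Proof.
  intros Hcd e; unfold set_arity.
  destruct (Nat.eqb_spec e d), (Nat.eqb_spec e c); congruence.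
Qed.

Lemma arity_safe_set_fresh (r : arity_map) c v P :
  ~ In c (fn P) -> arity_safe (set_arity r c v) P <-> arity_safe r P.
Proof.
  intros Hc; split; apply arity_safe_fn; intros e He; unfold set_arity;
    destruct (Nat.eqb_spec e c); congruence.
Qed.

Lemma arity_safe_scong P Q : scong P Q -> forall r, arity_safe r P <-> arity_safe r Q.
Proof.
  induction 1 as [| P Q _ IH | P Q R _ IH1 _ IH2 | | | | | P P' Q Q' _ IH1 _ IH2
    | c [|] P P' _ IH | | | | | | c [|] | c s d t P Hcd | c s P Q HQ | c d s P Hd];
    intros r; simpl; try tauto.
  - symmetry; auto.
  - rewrite IH1; auto.
  - rewrite IH1, IH2; tauto.
  - split; intros [n Hn]; exists n; apply IH; auto.
  - auto.
  - split; auto; intros; exists 0; auto.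
  - pose proof (fun v w => set_arity_comm r c d v w Hcd) as Hcomm.
    destruct s, t; simpl; split;
      try (intros [n [m Hm]]; exists m, n); try (intros [n Hn]; exists n); intros;
      (eapply arity_safe_ext; [|eassumption]); intros; rewrite Hcomm; auto.
  - destruct s; simpl.
    + pose proof (fun n => arity_safe_set_fresh r c (Some n) Q HQ) as HQn.
      split; [intros [[n Hn] HQr] | intros [n [Hn HQr]]];
        [exists n; rewrite HQn | split; [exists n | rewrite <- (HQn n)]]; auto.
    + rewrite (arity_safe_set_fresh r c _ Q HQ); tauto.
  - assert (Hren : forall v, arity_safe (set_arity r c v) P <->
                             arity_safe (set_arity r d v) (rename c d P)).
    { intros v; apply arity_safe_rename; auto.
      - unfold set_arity; rewrite !Nat.eqb_refl; auto.
      - intros e Hec Hed; unfold set_arity.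
        apply Nat.eqb_neq in Hec, Hed; rewrite Hec, Hed; auto. }
    destruct s; simpl; [split; intros [n Hn]; exists n; apply Hren; auto | apply Hren].
Qed.

Lemma err_arity_unsafe sigma P : err sigma P -> forall r : arity_map,
  (forall c, sigma c = Some Bot -> r c = None) -> ~ arity_safe r P.
Proof.
  induction 1 as [sigma c ds P xs Q _ Hlen | sigma c ds P _ Hbot | sigma c xs Q Hbot
    | | | sigma c [|] P _ _ IH | sigma P Q HPQ _ IH]; intros r Hr; simpl.
  - intros [Hds Hxs]; rewrite Hds in Hxs; congruence.
  - rewrite Hr; auto; discriminate.
  - rewrite Hr; auto; discriminate.
  - firstorder.
  - firstorder.
  - intros [n Hn]; apply (IH _) in Hn; auto.
    intros e; unfold upd, set_arity; destruct (e =? c); auto; discriminate.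
  - apply IH; intros e; unfold upd, set_arity; destruct (e =? c); auto.
  - rewrite (arity_safe_scong _ _ HPQ); auto.
Qed.

Lemma key_eq_dec (k k' : key) : {k = k'} + {k <> k'}.
Proof. decide equality; [decide equality|]; apply Nat.eq_dec. Qed.

Lemma arity_eq_dec (x y : option nat) : {x = y} + {x <> y}.
Proof. decide equality; apply Nat.eq_dec. Qed.

Definition occ (G : env) (c : nat) : nat := count_occ key_eq_dec (dom G) (KId (IChan c)).

Definition uniq0_ty (T : ty) : Prop := exists ts, T = TCh ts (Uniq 0).

Definition uniq0_chan (G : env) (c : nat) : Prop :=
  exists T, In (KId (IChan c), T) G /\ uniq0_ty T.

Definition uniq0_linear (G : env) : Prop := forall c, uniq0_chan G c -> occ G c <= 1.

Definition arity (T : ty) : option nat :=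
  match T with
  | TCh _ (Uniq 0) | TProc => None
  | TCh ts _ => Some (length ts)
  end.

Definition arity_compat (r : arity_map) (G : env) : Prop :=
  forall c T, In (KId (IChan c), T) G -> r c = arity T.

Lemma occ_app G1 G2 c : occ (G1 ++ G2) c = occ G1 c + occ G2 c.
Proof. unfold occ, dom; rewrite map_app; apply count_occ_app. Qed.

Lemma occ_single k T c : occ [(k, T)] c = if key_eq_dec k (KId (IChan c)) then 1 else 0.
Proof. unfold occ; simpl; destruct key_eq_dec; auto. Qed.

Lemma occ_pos G c T : In (KId (IChan c), T) G -> 1 <= occ G c.
Proof. intros H; apply (in_map fst), (count_occ_In key_eq_dec) in H; exact H. Qed.

Lemma occ_zero G c : ~ In (KId (IChan c)) (dom G) -> occ G c = 0.
Proof. apply count_occ_not_In. Qed.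

Lemma occ_perm G G' c : Permutation G G' -> occ G c = occ G' c.
Proof. intros H; apply (Permutation_count_occ key_eq_dec), Permutation_map, H. Qed.

Lemma uniq0_chan_app G1 G2 c :
  uniq0_chan (G1 ++ G2) c <-> uniq0_chan G1 c \/ uniq0_chan G2 c.
Proof. unfold uniq0_chan; setoid_rewrite in_app_iff; firstorder. Qed.

Lemma uniq0_chan_dom G c : uniq0_chan G c -> In (KId (IChan c)) (dom G).
Proof. intros [T [H _]]; apply (in_map fst) in H; exact H. Qed.

Lemma arity_compat_app r G1 G2 :
  arity_compat r (G1 ++ G2) <-> arity_compat r G1 /\ arity_compat r G2.
Proof. unfold arity_compat; setoid_rewrite in_app_iff; firstorder. Qed.

Lemma arity_compat_uniq0 r G c : arity_compat r G -> uniq0_chan G c -> r c = None.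
Proof. intros Hr [T [HT [ts ->]]]; apply (Hr _ _ HT). Qed.

Lemma uniq0_linear_disjoint G1 G2 c :
  uniq0_linear (G1 ++ G2) -> uniq0_chan G1 c -> uniq0_chan G2 c -> False.
Proof.
  intros Hlin H1 H2.
  assert (Hocc := Hlin c (proj2 (uniq0_chan_app _ _ _) (or_introl H1))).
  destruct H1 as [T1 [H1 _]], H2 as [T2 [H2 _]].
  apply occ_pos in H1; apply occ_pos in H2; rewrite occ_app in Hocc; lia.
Qed.

Lemma uniq0_linear_app_l G1 G2 : uniq0_linear (G1 ++ G2) -> uniq0_linear G1.
Proof.
  intros Hlin c Hc; specialize (Hlin c (proj2 (uniq0_chan_app _ _ _) (or_introl Hc))).
  rewrite occ_app in Hlin; lia.
Qed.

Lemma uniq0_linear_app_r G1 G2 : uniq0_linear (G1 ++ G2) -> uniq0_linear G2.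
Proof.
  intros Hlin c Hc; specialize (Hlin c (proj2 (uniq0_chan_app _ _ _) (or_intror Hc))).
  rewrite occ_app in Hlin; lia.
Qed.

Lemma uniq0_linear_last G c T :
  uniq0_ty T -> uniq0_linear (G ++ [(KId (IChan c), T)]) -> ~ In (KId (IChan c)) (dom G).
Proof.
  intros HuT Hlin HG.
  assert (Hc : uniq0_chan (G ++ [(KId (IChan c), T)]) c)
    by (exists T; rewrite in_app_iff; simpl; auto).
  specialize (Hlin c Hc); rewrite occ_app, occ_single in Hlin.
  apply (count_occ_In key_eq_dec) in HG; unfold occ in Hlin.
  destruct key_eq_dec; [lia | congruence].
Qed.

(* A [bullet_0] channel can still be split into an affine capability and used at
   any arity ([typ_uniq0] changes its payload type), so its arity is chosen by
   the derivation rather than read off [G]. *)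
Definition arity_realizable (G : env) (P : proc) : Prop :=
  uniq0_linear G -> forall r, arity_compat r G ->
  exists r', (forall c, r' c <> r c -> uniq0_chan G c) /\ arity_safe r' P.

(* [G] is the environment of a typing rule's conclusion, [G'] that of its premise. *)
Definition env_refines (G G' : env) : Prop :=
  (forall c, uniq0_chan G' c -> uniq0_chan G c) /\
  (uniq0_linear G -> uniq0_linear G') /\
  (uniq0_linear G -> forall r, arity_compat r G ->
     exists r', arity_compat r' G' /\ forall c, r' c <> r c -> uniq0_chan G c).

Lemma arity_realizable_refines G G' P :
  env_refines G G' -> arity_realizable G' P -> arity_realizable G P.
Proof.
  intros [Huniq [Hlin Hcompat]] HP HG r Hr.
  destruct (Hcompat HG r Hr) as [r0 [Hr0 Hdiff0]].
  destruct (HP (Hlin HG) r0 Hr0) as [r1 [Hdiff1 Hsafe]].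
  exists r1; split; auto.
  intros c Hc; destruct (arity_eq_dec (r1 c) (r0 c)) as [E|E]; [rewrite E in Hc|]; auto.
Qed.

Lemma env_refines_perm G G' : Permutation G G' -> env_refines G' G.
Proof.
  intros HGG'.
  assert (Huniq : forall c, uniq0_chan G c -> uniq0_chan G' c).
  { intros c [T [HT HuT]]; exists T; split; auto; eapply Permutation_in; eauto. }
  split; [|split]; auto.
  - intros Hlin c Hc; rewrite (occ_perm _ _ _ HGG'); auto.
  - intros _ r Hr; exists r; split; [|congruence].
    intros c T HT; apply Hr; eapply Permutation_in; eauto.
Qed.

Lemma env_refines_retype G k T D v :
  Forall (fun e => fst e = k /\ arity (snd e) = v) D ->
  uniq0_ty T \/ arity T = v ->
  (forall e, In e D -> uniq0_ty (snd e) -> uniq0_ty T /\ D = [e]) ->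
  env_refines (G ++ [(k, T)]) (G ++ D).
Proof.
  intros HD HT HDuniq.
  assert (HDkey : forall c T', In (KId (IChan c), T') D -> k = KId (IChan c) /\ arity T' = v)
    by (intros c T' H; rewrite Forall_forall in HD; destruct (HD _ H); auto).
  assert (Huniq : forall c, uniq0_chan (G ++ D) c -> uniq0_chan (G ++ [(k, T)]) c).
  { intros c Hc; apply uniq0_chan_app in Hc as [Hc | [T' [HT' HuT']]];
      apply uniq0_chan_app; [auto|right].
    destruct (HDkey c T' HT') as [-> _]; exists T; simpl; split; auto.
    apply (HDuniq _ HT' HuT'). }
  split; [|split]; auto.
  - intros Hlin c Hc; pose proof (Hlin c (Huniq c Hc)) as Hocc; rewrite !occ_app in *.
    apply uniq0_chan_app in Hc as [[T' [HT' _]] | [T' [HT' HuT']]].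
    + apply occ_pos in HT'.
      assert (Hk : k <> KId (IChan c))
        by (rewrite occ_single in Hocc; destruct key_eq_dec; [lia | auto]).
      enough (occ D c = 0) by lia.
      apply occ_zero; unfold dom; rewrite in_map_iff; intros [[k' T''] [Hk' HDc]].
      simpl in Hk'; subst k'; destruct (HDkey c T'' HDc); auto.
    + destruct (HDuniq _ HT' HuT') as [HuT ->]; destruct (HDkey c T' ltac:(left; auto)) as [-> _].
      rewrite (occ_zero G c), occ_single; [destruct key_eq_dec; lia|].
      apply (uniq0_linear_last G c T); auto.
  - intros Hlin r Hr.
    exists (fun e => if key_eq_dec k (KId (IChan e)) then v else r e); split.
    + intros c T' HT'; destruct key_eq_dec as [-> | Hk].
      * apply in_app_iff in HT' as [HT' | HT']; [|symmetry; apply (HDkey c T' HT')].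
        rewrite <- (Hr c T'), (Hr c T); try (apply in_app_iff; simpl; auto).
        destruct HT as [HuT | HT]; auto.
        exfalso; apply (uniq0_linear_last G c T HuT Hlin); apply (in_map fst) in HT'; exact HT'.
      * apply in_app_iff in HT' as [HT' | HT']; [apply Hr, in_app_iff; auto|].
        destruct (HDkey c T' HT'); contradiction.
    + intros c Hc; destruct key_eq_dec as [-> | ]; [|congruence].
      exists T; split; [apply in_app_iff; simpl; auto|].
      destruct HT as [HuT | HT]; auto.
      rewrite (Hr c T) in Hc; [congruence | apply in_app_iff; simpl; auto].
Qed.

Lemma arity_ch ts a : a <> Uniq 0 -> arity (TCh ts a) = Some (length ts).
Proof. destruct a as [| |[|]]; simpl; congruence. Qed.

Lemma attr_le_uniq0 a : attr_le a (Uniq 0) -> a = Uniq 0.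
Proof.
  intros H; remember (Uniq 0) as b eqn:Hb; revert Hb.
  induction H as [a b Hab | | a b c _ IHab _ IHbc]; intros ->; auto.
  - inversion Hab.
  - rewrite IHab; auto.
Qed.

Lemma env_refines_split G k T T1 T2 :
  Defs.split T T1 T2 -> env_refines (G ++ [(k, T)]) (G ++ [(k, T1); (k, T2)]).
Proof.
  intros HT; apply env_refines_retype with (v := arity T1).
  - destruct HT; repeat constructor.
  - destruct HT as [| | ts [|i]]; [right; auto | right; auto | left; exists ts; auto | right; auto].
  - intros e He [ts Hts]; exfalso.
    destruct He as [<- | [<- | []]]; simpl in Hts; destruct HT; discriminate.
Qed.

Lemma env_refines_weak G k T : env_refines (G ++ [(k, T)]) G.
Proof.
  rewrite <- (app_nil_r G) at 2.
  apply env_refines_retype with (v := arity T); auto; intros e [].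
Qed.

Lemma env_refines_sub G k T1 T2 :
  subty T1 T2 -> env_refines (G ++ [(k, T1)]) (G ++ [(k, T2)]).
Proof.
  intros [ts a1 a2 Ha]; apply env_refines_retype with (v := arity (TCh ts a2)); auto.
  - assert (Ha1 : a1 = Uniq 0 \/ a1 <> Uniq 0) by (destruct a1 as [| |[|]]; auto; right; discriminate).
    destruct Ha1 as [-> | Ha1]; [left; exists ts; auto | right].
    rewrite !arity_ch; auto; intros ->; apply Ha1, attr_le_uniq0, Ha.
  - intros e [<- | []] [ts' Hts]; simpl in Hts; injection Hts as _ ->.
    split; auto; exists ts; rewrite (attr_le_uniq0 _ Ha); auto.
Qed.

Lemma env_refines_uniq0 G k ts1 ts2 :
  env_refines (G ++ [(k, TCh ts1 (Uniq 0))]) (G ++ [(k, TCh ts2 (Uniq 0))]).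
Proof.
  apply env_refines_retype with (v := None); auto.
  - intros e [<- | []] _; split; auto; exists ts1; auto.
Qed.

Lemma arity_realizable_of_safe G P :
  (forall r, arity_compat r G -> arity_safe r P) -> arity_realizable G P.
Proof. intros HP _ r Hr; exists r; split; [congruence | auto]. Qed.

Lemma dec_not_uniq0 u ts a D : dec u ts a = Some D -> a <> Uniq 0.
Proof. destruct a as [| |[|]]; simpl; congruence. Qed.

Lemma arity_realizable_in G u ts a D xs P :
  dec u ts a = Some D -> length xs = length ts ->
  arity_realizable (G ++ [(KId u, TCh ts a)]) (PIn u xs P).
Proof.
  intros HD Hlen; apply arity_realizable_of_safe; intros r Hr; destruct u as [c|]; simpl; auto.
  rewrite (Hr c (TCh ts a)), arity_ch, Hlen; eauto using dec_not_uniq0.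
  apply in_app_iff; simpl; auto.
Qed.

Lemma arity_realizable_out G u ts a D vs P :
  dec u ts a = Some D -> length vs = length ts ->
  arity_realizable (G ++ (KId u, TCh ts a) :: id_env vs ts) (POut u vs P).
Proof.
  intros HD Hlen; apply arity_realizable_of_safe; intros r Hr; destruct u as [c|]; simpl; auto.
  rewrite (Hr c (TCh ts a)), arity_ch, Hlen; eauto using dec_not_uniq0.
  apply in_app_iff; simpl; auto.
Qed.

Lemma arity_realizable_scong G P Q :
  scong P Q -> arity_realizable G Q -> arity_realizable G P.
Proof.
  intros HPQ HQ Hlin r Hr; destruct (HQ Hlin r Hr) as [r' [Hdiff Hsafe]].
  exists r'; split; auto; apply (arity_safe_scong _ _ HPQ); auto.
Qed.

Lemma arity_realizable_par G1 G2 P Q :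
  arity_realizable G1 P -> arity_realizable G2 Q -> arity_realizable (G1 ++ G2) (PPar P Q).
Proof.
  intros HP HQ Hlin r Hr; apply arity_compat_app in Hr as Hr12; destruct Hr12 as [Hr1 Hr2].
  destruct (HP (uniq0_linear_app_l _ _ Hlin) r Hr1) as [r1 [Hdiff1 Hsafe1]].
  destruct (HQ (uniq0_linear_app_r _ _ Hlin) r Hr2) as [r2 [Hdiff2 Hsafe2]].
  (* the two sides may only choose arities for disjoint sets of channels *)
  exists (fun c => if arity_eq_dec (r1 c) (r c) then r2 c else r1 c); split.
  - intros c; destruct arity_eq_dec; intros Hc; apply uniq0_chan_app; auto.
  - split; (eapply arity_safe_mono; [|eassumption]); intros c n Hn;
      destruct arity_eq_dec as [E | E]; auto.
    + destruct (arity_eq_dec (r2 c) (r c)); [congruence|].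
      rewrite (arity_compat_uniq0 r G2 c) in E; auto; congruence.
    + exfalso; apply (uniq0_linear_disjoint G1 G2 c Hlin); auto.
      apply Hdiff2; rewrite (arity_compat_uniq0 r G1 c); auto; congruence.
Qed.

Lemma arity_compat_set_fresh r G c v :
  ~ In (KId (IChan c)) (dom G) -> arity_compat r G -> arity_compat (set_arity r c v) G.
Proof.
  intros Hc Hr e T HT; unfold set_arity; destruct (Nat.eqb_spec e c) as [-> |]; auto.
  exfalso; apply (in_map fst) in HT; exact (Hc HT).
Qed.

Lemma arity_realizable_nu_top G c T P :
  ~ In (KId (IChan c)) (dom G) ->
  arity_realizable (G ++ [(KId (IChan c), T)]) P -> arity_realizable G (PNu c Top P).
Proof.
  intros Hc HP Hlin r Hr.
  assert (Hsingle : forall e, uniq0_chan [(KId (IChan c), T)] e -> e = c)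
    by (intros e [T' [[HT' | []] _]]; congruence).
  assert (Hlin' : uniq0_linear (G ++ [(KId (IChan c), T)])).
  { intros e He; rewrite occ_app, occ_single.
    destruct key_eq_dec as [E | E].
    - injection E as ->; rewrite occ_zero; auto.
    - apply uniq0_chan_app in He as [He | He]; [rewrite Nat.add_0_r; auto|].
      apply Hsingle in He; congruence. }
  assert (Hr' : arity_compat (set_arity r c (arity T)) (G ++ [(KId (IChan c), T)])).
  { apply arity_compat_app; split; [apply arity_compat_set_fresh; auto|].
    intros e T' [HT' | []]; injection HT' as -> ->.
    unfold set_arity; rewrite Nat.eqb_refl; auto. }
  destruct (HP Hlin' _ Hr') as [r1 [Hdiff Hsafe]].
  exists (set_arity r1 c (r c)); split.
  - intros e He; unfold set_arity in He; destruct (Nat.eqb_spec e c) as [| Hec]; [congruence|].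
    assert (Hr1e : r1 e <> set_arity r c (arity T) e)
      by (unfold set_arity; apply Nat.eqb_neq in Hec; rewrite Hec; auto).
    apply Hdiff, uniq0_chan_app in Hr1e as [He' | He']; auto.
    apply Hsingle in He'; congruence.
  - exists (match r1 c with Some n => n | None => 0 end).
    eapply arity_safe_mono; [|eassumption]; intros e n Hn; unfold set_arity.
    destruct (Nat.eqb_spec e c) as [-> |]; rewrite Hn; auto.
Qed.

Lemma arity_realizable_nu_bot G c P :
  ~ In (KId (IChan c)) (dom G) -> arity_realizable G P -> arity_realizable G (PNu c Bot P).
Proof.
  intros Hc HP Hlin r Hr.
  destruct (HP Hlin (set_arity r c None)) as [r1 [Hdiff Hsafe]];
    [apply arity_compat_set_fresh; auto|].
  exists (set_arity r1 c (r c)); split.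
  - intros e He; unfold set_arity in He; destruct (Nat.eqb_spec e c) as [| Hec]; [congruence|].
    apply Hdiff; unfold set_arity; apply Nat.eqb_neq in Hec; rewrite Hec; auto.
  - simpl; eapply arity_safe_mono; [|eassumption]; intros e n Hn; unfold set_arity.
    destruct (Nat.eqb_spec e c) as [-> |]; auto.
    exfalso; apply Hc, uniq0_chan_dom, Hdiff.
    unfold set_arity; rewrite Nat.eqb_refl; congruence.
Qed.

Lemma typ_arity_realizable G P : typ G P -> arity_realizable G P.
Proof.
  induction 1; try (apply arity_realizable_of_safe; simpl; auto; fail).
  - eapply arity_realizable_in; eauto.
  - eapply arity_realizable_out; eauto.
  - apply arity_realizable_par; auto.
  - eapply arity_realizable_nu_top; eauto.
  - apply arity_realizable_nu_bot; auto.
  - eapply arity_realizable_scong; [apply sc_alpha|]; eauto.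
  - eapply arity_realizable_refines; [apply env_refines_perm|]; eauto.
  - eapply arity_realizable_refines; [apply env_refines_split|]; eauto.
  - eapply arity_realizable_refines; [apply env_refines_weak|]; eauto.
  - eapply arity_realizable_refines; [apply env_refines_sub|]; eauto.
  - eapply arity_realizable_refines; [apply env_refines_uniq0|]; eauto.
Qed.

Fixpoint env_arity (G : env) (c : nat) : option nat :=
  match G with
  | [] => None
  | (k, T) :: G' => if key_eq_dec k (KId (IChan c)) then arity T else env_arity G' c
  end.

Lemma env_arity_compat G : NoDup (dom G) -> arity_compat (env_arity G) G.
Proof.
  induction G as [|[k T] G IH]; intros Hnd c T' HT'; simpl in *; [tauto|].
  inversion Hnd as [| ? ? HkG HndG]; subst.
  destruct HT' as [HT' | HT']; destruct key_eq_dec as [-> | Hk].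
  - injection HT' as ->; auto.
  - injection HT'; congruence.
  - exfalso; apply (in_map fst) in HT'; auto.
  - apply IH; auto.
Qed.

Lemma env_arity_dom G c n : env_arity G c = Some n -> In (KId (IChan c)) (dom G).
Proof.
  induction G as [|[k T] G IH]; simpl; [discriminate|].
  destruct key_eq_dec; auto.
Qed.

Lemma nodup_uniq0_linear G : NoDup (dom G) -> uniq0_linear G.
Proof. intros Hnd c _; apply NoDup_count_occ, Hnd. Qed.

Theorem mainTheorem2 (G : env) (sigma : chstate) (P : proc) :
  finite_state sigma ->
  is_config sigma P ->
  config_typed G sigma P ->
  ~ err sigma P.
Proof.
  intros _ _ [Htop [HG Hnd]] Herr.
  destruct (typ_arity_realizable G P HG (nodup_uniq0_linear G Hnd) (env_arity G)
              (env_arity_compat G Hnd)) as [r [Hdiff Hsafe]].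
  apply (err_arity_unsafe _ _ Herr r); auto.
  intros c Hbot; destruct (r c) as [n|] eqn:Hrc; auto; exfalso.
  assert (Hc : In (KId (IChan c)) (dom G)).
  { destruct (arity_eq_dec (r c) (env_arity G c)) as [E | E].
    - apply (env_arity_dom G c n); congruence.
    - apply uniq0_chan_dom, Hdiff, E. }
  rewrite Htop in Hbot; auto; discriminate.
Qed.
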